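(* Let $G$ be a group containing an element of infinite order, and suppose $G$ acts on a Smale space $(X,\varphi)$. Then the action of $G$ is not free.
   Context: A Smale space $(X,\varphi)$ is an infinite compact metric space $(X,d)$ with a homeomorphism $\varphi:X\to X$ for which there exist constants $\epsilon_X>0$, $0<\lambda_X<1$ and a map $[\cdot,\cdot]$ defined on pairs $(x,y)$ with $d(x,y)<\epsilon_X$ such that, whenever both sides are defined, $[x,x]=x$, $[x,[y,z]]=[x,z]$, $[[x,y],z]=[x,z]$, $\varphi([x,y])=[\varphi(x),\varphi(y)]$, and moreover $d(\varphi(x),\varphi(y))\le\lambda_X d(x,y)$ whenever $[x,y]=y$, and $d(\varphi^{-1}(x),\varphi^{-1}(y))\le\lambda_X d(x,y)$ whenever $[x,y]=x$. An action of a group $G$ on $(X,\varphi)$ is a (continuous) homomorphism $G\to\mathrm{Homeo}(X)$, $g\mapsto(x\mapsto gx)$, such that $g\varphi(x)=\varphi(gx)$ for all $x\in X$, $g\in G$. The action is free if for every $x\in X$, $gx=x$ implies $g=e$. *)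

From Stdlib Require Import Reals List.
Open Scope R_scope.

Definition is_metric {X : Type} (d : X -> X -> R) : Prop :=
  (forall x y, 0 <= d x y) /\
  (forall x y, d x y = 0 <-> x = y) /\
  (forall x y, d x y = d y x) /\
  (forall x y z, d x z <= d x y + d y z).

Definition metric_open {X : Type} (d : X -> X -> R) (U : X -> Prop) : Prop :=
  forall x, U x -> exists r, 0 < r /\ forall y, d x y < r -> U y.

Definition metric_compact {X : Type} (d : X -> X -> R) : Prop :=
  forall (I : Type) (U : I -> X -> Prop),
    (forall i, metric_open d (U i)) ->
    (forall x, exists i, U i x) ->
    exists l : list I, forall x, exists i, In i l /\ U i x.

Definition infinite_type (X : Type) : Prop :=
  forall l : list X, exists x, ~ In x l.

Definition metric_continuous {X : Type} (d : X -> X -> R) (f : X -> X) : Prop :=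
  forall x e, 0 < e -> exists del, 0 < del /\
    forall y, d x y < del -> d (f x) (f y) < e.

Definition is_homeomorphism {X : Type} (d : X -> X -> R) (f finv : X -> X) : Prop :=
  (forall x, finv (f x) = x) /\ (forall x, f (finv x) = x) /\
  metric_continuous d f /\ metric_continuous d finv.

(** Smale space (X, d, phi) with inverse phiinv, bracket br (only meaningful on
    pairs with d x y < eps), constants eps and lam.  Each axiom is required
    whenever all brackets involved are defined. *)
Definition is_smale_space {X : Type} (d : X -> X -> R) (phi phiinv : X -> X)
    (br : X -> X -> X) (eps lam : R) : Prop :=
  is_metric d /\ metric_compact d /\ infinite_type X /\
  is_homeomorphism d phi phiinv /\
  0 < eps /\ 0 < lam /\ lam < 1 /\
  (forall x y, d x y < eps -> forall e, 0 < e -> exists del, 0 < del /\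
     forall x' y', d x' y' < eps -> d x x' < del -> d y y' < del ->
       d (br x y) (br x' y') < e) /\
  (forall x, br x x = x) /\
  (forall x y z, d y z < eps -> d x (br y z) < eps -> d x z < eps ->
     br x (br y z) = br x z) /\
  (forall x y z, d x y < eps -> d (br x y) z < eps -> d x z < eps ->
     br (br x y) z = br x z) /\
  (forall x y, d x y < eps -> d (phi x) (phi y) < eps ->
     phi (br x y) = br (phi x) (phi y)) /\
  (forall x y, d x y < eps -> br x y = y ->
     d (phi x) (phi y) <= lam * d x y) /\
  (forall x y, d x y < eps -> br x y = x ->
     d (phiinv x) (phiinv y) <= lam * d x y).

Definition is_group {G : Type} (mul : G -> G -> G) (inv : G -> G) (e : G) : Prop :=
  (forall a b c, mul a (mul b c) = mul (mul a b) c) /\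
  (forall a, mul e a = a) /\ (forall a, mul a e = a) /\
  (forall a, mul (inv a) a = e) /\ (forall a, mul a (inv a) = e).

Fixpoint gpow {G : Type} (mul : G -> G -> G) (e : G) (g : G) (n : nat) : G :=
  match n with
  | O => e
  | S k => mul g (gpow mul e g k)
  end.

Definition infinite_order {G : Type} (mul : G -> G -> G) (e : G) (g : G) : Prop :=
  forall n : nat, (0 < n)%nat -> gpow mul e g n <> e.

Definition is_smale_action {G X : Type} (mul : G -> G -> G) (e : G)
    (d : X -> X -> R) (phi : X -> X) (act : G -> X -> X) : Prop :=
  (forall g, metric_continuous d (act g)) /\
  (forall x, act e x = x) /\
  (forall g h x, act (mul g h) x = act g (act h x)) /\
  (forall g x, act g (phi x) = phi (act g x)).

Definition free_action {G X : Type} (e : G) (act : G -> X -> X) : Prop :=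
  forall x g, act g x = x -> g = e.

From Stdlib Require Import Reals List Lia Lra Classical ClassicalEpsilon.
Open Scope R_scope.

(* First, a Smale space has a periodic point: by compactness some iterate
   phi^m y returns close to y, and bracketing the periodic pseudo-orbit of y with true orbit
   segments produces points x with d(x, phi^m x) arbitrarily small; the lower semicontinuous
   function x |-> d(x, phi^m x) then vanishes somewhere on the compact space X.  Second,
   phi^m-periodic points are isolated from each other: if the orbits of two of them stay
   uniformly close, the stable and unstable contractions squeeze their distance to 0.  Since
   the action commutes with phi, the points g^k p of a periodic point p are all periodic, so
   by compactness two of them coincide and g^(b-a) fixes p. *)

Lemma pow_le_1 (lam : R) (n : nat) : 0 <= lam <= 1 -> lam ^ n <= 1.
Proof.
  intros Hlam. induction n as [|n IH]; simpl; [lra|].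
  pose proof (pow_le lam n (proj1 Hlam)). nra.
Qed.

Lemma pow_mul_le (lam x : R) (n : nat) : 0 <= lam <= 1 -> 0 <= x -> lam ^ n * x <= x.
Proof.
  intros Hlam Hx. rewrite <- (Rmult_1_l x) at 2.
  apply Rmult_le_compat_r; [easy|now apply pow_le_1].
Qed.

Lemma pow_mul_vanishes (lam c e : R) :
  0 <= lam < 1 -> 0 <= c -> 0 < e -> exists N, forall n, (N <= n)%nat -> lam ^ n * c < e.
Proof.
  intros Hlam Hc He.
  destruct (pow_lt_1_zero lam ltac:(rewrite Rabs_pos_eq; lra) (e / (c + 1)))
    as [N HN]; [apply Rdiv_lt_0_compat; lra|].
  exists N; intros n Hn. specialize (HN n Hn).
  assert (Hpow : 0 <= lam ^ n) by (apply pow_le; lra).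
  rewrite Rabs_pos_eq in HN by easy.
  apply Rmult_lt_compat_r with (r := c + 1) in HN; [|lra].
  replace (e / (c + 1) * (c + 1)) with e in HN by (field; lra).
  assert (lam ^ n * c <= lam ^ n * (c + 1)) by (apply Rmult_le_compat_l; lra).
  lra.
Qed.

Lemma list_pos_lower_bound {A : Type} (w : A -> R) (l : list A) :
  (forall a, 0 < w a) -> exists del, 0 < del /\ forall a, In a l -> del <= w a.
Proof.
  intros Hw; induction l as [|a l [del [Hdel Hl]]].
  - exists 1; split; [lra|]; intros a [].
  - exists (Rmin del (w a)); split; [now apply Rmin_glb_lt|].
    intros c [<-|Hc]; [apply Rmin_r|].
    eapply Rle_trans; [apply Rmin_l|auto].
Qed.

Lemma nat_seq_pigeonhole {A : Type} (s : nat -> A) (l : list A) :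
  (forall k, In (s k) l) -> exists i j, (i < j)%nat /\ s i = s j.
Proof.
  intros Hs. apply NNPP; intros Hinj.
  assert (Hnodup : NoDup (map s (seq 0 (S (length l))))).
  { apply NoDup_map_NoDup_ForallPairs; [|apply seq_NoDup].
    intros a b _ _ Hab. destruct (Nat.lt_trichotomy a b) as [h|[h|h]]; auto;
      exfalso; apply Hinj; eauto. }
  apply NoDup_incl_length with (l' := l) in Hnodup.
  - rewrite length_map, length_seq in Hnodup. lia.
  - intros x Hx. apply in_map_iff in Hx. destruct Hx as [k [<- _]]. apply Hs.
Qed.

Lemma iter_commute {A : Type} (f h : A -> A) (n : nat) (x : A) :
  (forall x, h (f x) = f (h x)) -> h (Nat.iter n f x) = Nat.iter n f (h x).
Proof. intros Hfh. induction n as [|n IH]; simpl; congruence. Qed.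

Lemma iter_cancel {A : Type} (f g : A -> A) (i k : nat) (x : A) :
  (forall x, g (f x) = x) -> (i <= k)%nat ->
  Nat.iter i g (Nat.iter k f x) = Nat.iter (k - i) f x.
Proof.
  intros Hgf. revert k; induction i as [|i IH]; intros k Hik.
  - now rewrite Nat.sub_0_r.
  - simpl. rewrite IH by lia. replace (k - i)%nat with (S (k - S i)) by lia. apply Hgf.
Qed.

Lemma iter_periodic {A : Type} (f : A -> A) (m n : nat) (x : A) :
  Nat.iter m f x = x -> Nat.iter (m * n) f x = x.
Proof.
  intros Hx. induction n as [|n IH]; [now rewrite Nat.mul_0_r|].
  replace (m * S n)%nat with (m + m * n)%nat by lia. now rewrite Nat.iter_add, IH.
Qed.

Lemma iter_periodic_mod {A : Type} (f : A -> A) (m i : nat) (x : A) :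
  Nat.iter m f x = x -> Nat.iter i f x = Nat.iter (i mod m) f x.
Proof.
  intros Hx. transitivity (Nat.iter (i mod m + m * (i / m)) f x).
  - f_equal. pose proof (Nat.div_mod_eq i m). lia.
  - now rewrite Nat.iter_add, iter_periodic.
Qed.

Section Metric.
Context {X : Type} {d : X -> X -> R}.
Hypothesis d_metric : is_metric d.

Lemma dist_ge0 x y : 0 <= d x y.
Proof. apply d_metric. Qed.

Lemma dist_eq0 x y : d x y = 0 -> x = y.
Proof. apply d_metric. Qed.

Lemma dist_xx x : d x x = 0.
Proof. now apply d_metric. Qed.

Lemma dist_comm x y : d x y = d y x.
Proof. apply d_metric. Qed.

Lemma dist_triangle x y z : d x z <= d x y + d y z.
Proof. apply d_metric. Qed.

Lemma ball_open c r : metric_open d (fun y => d c y < r).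
Proof.
  intros y Hy. exists (r - d c y); split; [lra|].
  intros z Hz. pose proof (dist_triangle c y z). lra.
Qed.

Lemma iter_continuous f n : metric_continuous d f -> metric_continuous d (Nat.iter n f).
Proof.
  intros Hf. induction n as [|n IH]; intros x e He; [now exists e|].
  destruct (Hf (Nat.iter n f x) e He) as [del1 [Hdel1 H1]].
  destruct (IH x del1 Hdel1) as [del2 [Hdel2 H2]].
  exists del2; split; [easy|]. intros y Hy. now apply H1, H2.
Qed.

Lemma open_preimage f U :
  metric_continuous d f -> metric_open d U -> metric_open d (fun x => U (f x)).
Proof.
  intros Hf HU x Hx. destruct (HU (f x) Hx) as [r [Hr HUr]].
  destruct (Hf x r Hr) as [del [Hdel Hfx]].
  exists del; split; [easy|]. intros y Hy. now apply HUr, Hfx.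
Qed.

Lemma open_finite_inter (U : nat -> X -> Prop) n :
  (forall i, (i < n)%nat -> metric_open d (U i)) ->
  metric_open d (fun x => forall i, (i < n)%nat -> U i x).
Proof.
  induction n as [|n IH]; intros HU x Hx.
  - exists 1; split; [lra|]. intros y _ i Hi. lia.
  - destruct (IH (fun i Hi => HU i (Nat.lt_lt_succ_r _ _ Hi)) x
      (fun i Hi => Hx i (Nat.lt_lt_succ_r _ _ Hi))) as [r1 [Hr1 H1]].
    destruct (HU n (Nat.lt_succ_diag_r n) x (Hx n (Nat.lt_succ_diag_r n))) as [r2 [Hr2 H2]].
    exists (Rmin r1 r2); split; [now apply Rmin_glb_lt|].
    intros y Hy i Hi.
    destruct (Nat.eq_dec i n) as [->|Hin].
    + apply H2. eapply Rlt_le_trans; [exact Hy|apply Rmin_r].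
    + apply H1; [eapply Rlt_le_trans; [exact Hy|apply Rmin_l]|lia].
Qed.

Lemma dist_image_lsc f :
  metric_continuous d f -> forall x e, 0 < e -> exists del, 0 < del /\
    forall y, d x y < del -> d x (f x) - e < d y (f y).
Proof.
  intros Hf x e He. destruct (Hf x (e / 2) ltac:(lra)) as [del [Hdel Hfx]].
  exists (Rmin del (e / 2)); split; [apply Rmin_glb_lt; lra|].
  intros y Hy. pose proof (Rmin_l del (e / 2)). pose proof (Rmin_r del (e / 2)).
  specialize (Hfx y ltac:(lra)).
  pose proof (dist_triangle x y (f x)). pose proof (dist_triangle y (f y) (f x)).
  rewrite (dist_comm (f y) (f x)) in *. lra.
Qed.

Hypothesis d_compact : metric_compact d.

Lemma compact_uniform_radius (r : X -> R) :
  (forall x, 0 < r x) -> exists del, 0 < del /\ forall y, exists c, d c y < r c /\ del <= r c.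
Proof.
  intros Hr. destruct (d_compact X (fun c y => d c y < r c)) as [l Hl].
  - intros c. apply ball_open.
  - intros x. exists x. rewrite dist_xx. apply Hr.
  - destruct (list_pos_lower_bound r l Hr) as [del [Hdel Hmin]].
    exists del; split; [easy|]. intros y. destruct (Hl y) as [c [Hc Hcy]].
    exists c; split; auto.
Qed.

Lemma compact_pigeonhole (U : X -> X -> Prop) (s : nat -> X) :
  (forall c, metric_open d (U c)) -> (forall c, U c c) ->
  exists i j c, (i < j)%nat /\ U c (s i) /\ U c (s j).
Proof.
  intros HU Hself.
  destruct (d_compact X U HU (fun x => ex_intro _ x (Hself x))) as [l Hl].
  assert (Hcenter : forall k, {c | In c l /\ U c (s k)})
    by (intros k; apply constructive_indefinite_description, Hl).
  destruct (nat_seq_pigeonhole (fun k => proj1_sig (Hcenter k)) l) as [i [j [Hij Heq]]].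
  - intros k. apply (proj2_sig (Hcenter k)).
  - exists i, j, (proj1_sig (Hcenter i)). split; [easy|]. split.
    + apply (proj2_sig (Hcenter i)).
    + rewrite Heq. apply (proj2_sig (Hcenter j)).
Qed.

Lemma compact_seq_close (s : nat -> X) del :
  0 < del -> exists i j, (i < j)%nat /\ d (s i) (s j) < del.
Proof.
  intros Hdel.
  destruct (compact_pigeonhole (fun c y => d c y < del / 2) s) as (i & j & c & Hij & Hi & Hj).
  - intros c. apply ball_open.
  - intros c. rewrite dist_xx. lra.
  - exists i, j; split; [easy|].
    pose proof (dist_triangle (s i) c (s j)). rewrite dist_comm in Hi. lra.
Qed.

Lemma compact_recurrence (f : X -> X) (x0 : X) M del :
  0 < del -> exists y m, (M <= m)%nat /\ d y (Nat.iter m f y) < del.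
Proof.
  intros Hdel.
  destruct (compact_seq_close (fun k => Nat.iter (M * k) f x0) del Hdel) as (i & j & Hij & Hclose).
  exists (Nat.iter (M * i) f x0), (M * (j - i))%nat. split; [nia|].
  rewrite <- Nat.iter_add. replace (M * (j - i) + M * i)%nat with (M * j)%nat by nia.
  exact Hclose.
Qed.

Lemma compact_lsc_zero (F : X -> R) :
  (forall x, 0 <= F x) ->
  (forall x e, 0 < e -> exists del, 0 < del /\ forall y, d x y < del -> F x - e < F y) ->
  (forall e, 0 < e -> exists x, F x < e) -> exists x, F x = 0.
Proof.
  intros HF Hlsc Hinf. apply NNPP; intros Hnz.
  assert (Hpos : forall x, 0 < F x)
    by (intros x; destruct (HF x); [easy|exfalso; eauto]).
  assert (Hrad : forall x, {del | 0 < del /\ forall y, d x y < del -> F x / 2 < F y}).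
  { intros x. apply constructive_indefinite_description.
    destruct (Hlsc x (F x / 2)) as [del Hdel]; [specialize (Hpos x); lra|].
    exists del. now replace (F x / 2) with (F x - F x / 2) by field. }
  destruct (compact_uniform_radius (fun x => Rmin (proj1_sig (Hrad x)) (F x / 2)))
    as [del [Hdel Hcover]].
  { intros x. specialize (Hpos x). apply Rmin_glb_lt; [apply (proj2_sig (Hrad x))|lra]. }
  destruct (Hinf del Hdel) as [y Hy]. destruct (Hcover y) as [c [Hcy Hc]].
  pose proof (Rmin_l (proj1_sig (Hrad c)) (F c / 2)).
  pose proof (Rmin_r (proj1_sig (Hrad c)) (F c / 2)).
  pose proof (proj2 (proj2_sig (Hrad c)) y ltac:(lra)). lra.
Qed.

End Metric.

Section SmaleSpace.
Context {X : Type} {d : X -> X -> R} {phi phiinv : X -> X} {br : X -> X -> X} {eps lam : R}.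
Hypothesis smale : is_smale_space d phi phiinv br eps lam.

Let d_metric : is_metric d.
Proof. apply smale. Qed.
Let d_compact : metric_compact d.
Proof. apply smale. Qed.
Let X_infinite : infinite_type X.
Proof. apply smale. Qed.
Let phiinvK x : phiinv (phi x) = x.
Proof. destruct smale as (_ & _ & _ & [H _] & _); apply H. Qed.
Let phiK x : phi (phiinv x) = x.
Proof. destruct smale as (_ & _ & _ & (_ & H & _) & _); apply H. Qed.
Let phi_continuous : metric_continuous d phi.
Proof. destruct smale as (_ & _ & _ & (_ & _ & H & _) & _); apply H. Qed.
Let eps_gt0 : 0 < eps.
Proof. destruct smale as (_ & _ & _ & _ & H & _); apply H. Qed.
Let lam_bounds : 0 < lam < 1.
Proof. now destruct smale as (_ & _ & _ & _ & _ & ? & ? & _). Qed.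
Let br_continuous_diag c e : 0 < e -> exists del, 0 < del /\
  forall x y, d x y < eps -> d c x < del -> d c y < del -> d c (br x y) < e.
Proof.
  intros He. destruct smale as (_ & _ & _ & _ & _ & _ & _ & Hcont & Hxx & _).
  destruct (Hcont c c ltac:(rewrite dist_xx; auto) e He) as [del [Hdel Hbr]].
  exists del; split; [easy|]. intros x y Hxy Hx Hy.
  rewrite <- (Hxx c) at 1. now apply Hbr.
Qed.
Let br_xx x : br x x = x.
Proof. destruct smale as (_ & _ & _ & _ & _ & _ & _ & _ & H & _); apply H. Qed.
Let br_br_r x y z :
  d y z < eps -> d x (br y z) < eps -> d x z < eps -> br x (br y z) = br x z.
Proof. destruct smale as (_ & _ & _ & _ & _ & _ & _ & _ & _ & H & _); apply H. Qed.
Let br_br_l x y z :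
  d x y < eps -> d (br x y) z < eps -> d x z < eps -> br (br x y) z = br x z.
Proof. destruct smale as (_ & _ & _ & _ & _ & _ & _ & _ & _ & _ & H & _); apply H. Qed.
Let phi_br x y :
  d x y < eps -> d (phi x) (phi y) < eps -> phi (br x y) = br (phi x) (phi y).
Proof. destruct smale as (_ & _ & _ & _ & _ & _ & _ & _ & _ & _ & _ & H & _); apply H. Qed.
Let stable_contract x y :
  d x y < eps -> br x y = y -> d (phi x) (phi y) <= lam * d x y.
Proof. destruct smale as (_ & _ & _ & _ & _ & _ & _ & _ & _ & _ & _ & _ & H & _); apply H. Qed.
Let unstable_contract x y :
  d x y < eps -> br x y = x -> d (phiinv x) (phiinv y) <= lam * d x y.
Proof. destruct smale as (_ & _ & _ & _ & _ & _ & _ & _ & _ & _ & _ & _ & _ & H); apply H. Qed.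

Lemma br_stable_self x z : d x z < eps -> d x (br x z) < eps -> br x (br x z) = br x z.
Proof. intros Hxz Hx. now apply br_br_r. Qed.

Lemma br_unstable_self x y : d x y < eps -> d (br x y) y < eps -> br (br x y) y = br x y.
Proof. intros Hxy Hy. now apply br_br_l. Qed.

Lemma br_unstable_trans x y z :
  br x y = x -> br y z = y -> d y z < eps -> d x y < eps -> d x z < eps -> br x z = x.
Proof. intros Hxy Hyz Hdyz Hdxy Hdxz. rewrite <- (br_br_r x y z); congruence. Qed.

Lemma phiinv_br x y :
  d x y < eps -> d (phiinv x) (phiinv y) < eps -> phiinv (br x y) = br (phiinv x) (phiinv y).
Proof.
  intros Hxy Hinv. rewrite <- (phiinvK (br (phiinv x) (phiinv y))).
  now rewrite phi_br, !phiK by now rewrite ?phiK.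
Qed.

Lemma iter_phi_br K a b :
  (forall i, (i <= K)%nat -> d (Nat.iter i phi a) (Nat.iter i phi b) < eps) ->
  Nat.iter K phi (br a b) = br (Nat.iter K phi a) (Nat.iter K phi b).
Proof.
  induction K as [|K IH]; intros Hclose; [easy|]. simpl.
  rewrite IH by (intros i Hi; apply Hclose; lia).
  apply phi_br; [apply Hclose; lia|apply (Hclose (S K)); lia].
Qed.

Let lam_contracts x : 0 <= x -> lam * x <= x.
Proof. intros Hx. pose proof lam_bounds. nra. Qed.

Lemma stable_iter_contract t a z :
  d a z < eps -> br a z = z ->
  br (Nat.iter t phi a) (Nat.iter t phi z) = Nat.iter t phi z /\
  d (Nat.iter t phi a) (Nat.iter t phi z) <= lam ^ t * d a z.
Proof.
  intros Haz Hbr. induction t as [|t [IHbr IHd]]; [simpl; split; [easy|lra]|].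
  simpl. set (a' := Nat.iter t phi a) in *. set (z' := Nat.iter t phi z) in *.
  assert (Hd : d a' z' < eps)
    by (pose proof (pow_mul_le lam (d a z) t ltac:(lra) (dist_ge0 d_metric a z)); lra).
  pose proof (stable_contract a' z' Hd IHbr) as Hstep.
  pose proof (lam_contracts (d a' z') (dist_ge0 d_metric a' z')).
  split.
  - rewrite <- phi_br by lra. now rewrite IHbr.
  - rewrite Rmult_assoc. apply (Rle_trans _ _ _ Hstep), Rmult_le_compat_l; lra.
Qed.

Lemma unstable_iter_contract t z b :
  d z b < eps -> br z b = z ->
  br (Nat.iter t phiinv z) (Nat.iter t phiinv b) = Nat.iter t phiinv z /\
  d (Nat.iter t phiinv z) (Nat.iter t phiinv b) <= lam ^ t * d z b.
Proof.
  intros Hzb Hbr. induction t as [|t [IHbr IHd]]; [simpl; split; [easy|lra]|].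
  simpl. set (z' := Nat.iter t phiinv z) in *. set (b' := Nat.iter t phiinv b) in *.
  assert (Hd : d z' b' < eps)
    by (pose proof (pow_mul_le lam (d z b) t ltac:(lra) (dist_ge0 d_metric z b)); lra).
  pose proof (unstable_contract z' b' Hd IHbr) as Hstep.
  pose proof (lam_contracts (d z' b') (dist_ge0 d_metric z' b')).
  split.
  - rewrite <- phiinv_br by lra. now rewrite IHbr.
  - rewrite Rmult_assoc. apply (Rle_trans _ _ _ Hstep), Rmult_le_compat_l; lra.
Qed.

Definition bracket_modulus (gam eta : R) : Prop :=
  0 < gam <= eps /\ forall a b, d a b < gam -> d a (br a b) < eta /\ d (br a b) b < eta.

Lemma bracket_modulus_exists eta : 0 < eta -> exists gam, bracket_modulus gam eta.
Proof.
  intros Heta.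
  assert (Hdel : forall c, {del | 0 < del /\ forall x y, d x y < eps ->
      d c x < del -> d c y < del -> d c (br x y) < eta / 2})
    by (intros c; apply constructive_indefinite_description, br_continuous_diag; lra).
  set (r c := Rmin (proj1_sig (Hdel c)) (eta / 2) / 2).
  destruct (compact_uniform_radius d_metric d_compact r) as [del [Hdel0 Hcover]].
  { intros c. unfold r. destruct (proj2_sig (Hdel c)).
    assert (0 < Rmin (proj1_sig (Hdel c)) (eta / 2)) by (apply Rmin_glb_lt; lra). lra. }
  exists (Rmin del eps); split; [split; [now apply Rmin_glb_lt|apply Rmin_r]|].
  intros a b Hab. pose proof (Rmin_l del eps). pose proof (Rmin_r del eps).
  destruct (Hcover a) as [c [Hca Hrc]].
  destruct (proj2_sig (Hdel c)) as [_ Hcont].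
  assert (Hr : 2 * r c <= proj1_sig (Hdel c) /\ 2 * r c <= eta / 2)
    by (unfold r; pose proof (Rmin_l (proj1_sig (Hdel c)) (eta / 2));
        pose proof (Rmin_r (proj1_sig (Hdel c)) (eta / 2)); lra).
  pose proof (dist_triangle d_metric c a b).
  assert (Hcbr : d c (br a b) < eta / 2) by (apply Hcont; lra).
  pose proof (dist_triangle d_metric a c (br a b)).
  pose proof (dist_triangle d_metric (br a b) c b).
  rewrite (dist_comm d_metric a c), (dist_comm d_metric (br a b) c) in *. lra.
Qed.

Lemma bracket_modulus_ge0 (x : X) gam eta : bracket_modulus gam eta -> 0 <= eta.
Proof.
  intros [Hgam Hbr]. destruct (Hbr x x) as [Hx _]; [rewrite (dist_xx d_metric); lra|].
  pose proof (dist_ge0 d_metric x (br x x)). lra.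
Qed.

Section CloseOrbits.
Variables (gam eta : R).
Hypotheses (modulus : bracket_modulus gam eta) (eta_lt_eps : eta < eps).

Let close K a b := forall i, (i <= K)%nat -> d (Nat.iter i phi a) (Nat.iter i phi b) < gam.

Let close_eps K a b : close K a b ->
  forall i, (i <= K)%nat -> d (Nat.iter i phi a) (Nat.iter i phi b) < eps.
Proof. intros Hclose i Hi. specialize (Hclose i Hi). destruct modulus. lra. Qed.

Lemma br_stable_leg_shrinks K a b : close K a b ->
  d (Nat.iter K phi a) (br (Nat.iter K phi a) (Nat.iter K phi b)) <= lam ^ K * eta.
Proof.
  intros Hclose. destruct modulus as [Hgam Hbr].
  destruct (Hbr a b (Hclose 0%nat (Nat.le_0_l K))) as [Ha _].
  pose proof (close_eps K a b Hclose 0%nat (Nat.le_0_l K)) as Hab. simpl in Hab.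
  assert (Hstable : br a (br a b) = br a b) by (apply br_stable_self; lra).
  rewrite <- iter_phi_br by now apply close_eps.
  destruct (stable_iter_contract K a (br a b) ltac:(lra) Hstable) as [_ Hd].
  apply (Rle_trans _ _ _ Hd), Rmult_le_compat_l; [apply pow_le|]; lra.
Qed.

Lemma br_unstable_leg_shrinks K a b : close K a b -> d (br a b) b <= lam ^ K * eta.
Proof.
  intros Hclose. destruct modulus as [Hgam Hbr].
  assert (Hxy := Hclose K (Nat.le_refl K)).
  assert (Hshift := iter_phi_br K a b (close_eps K a b Hclose)).
  destruct (Hbr _ _ Hxy) as [_ Hy].
  assert (Hunstable : br (Nat.iter K phi (br a b)) (Nat.iter K phi b) = Nat.iter K phi (br a b))
    by (rewrite Hshift; apply br_unstable_self; lra).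
  rewrite <- Hshift in Hy.
  destruct (unstable_iter_contract K (Nat.iter K phi (br a b)) (Nat.iter K phi b) ltac:(lra)
    Hunstable) as [_ Hd].
  rewrite !(iter_cancel phi phiinv K K), Nat.sub_diag in Hd by first [exact phiinvK | lia].
  apply (Rle_trans _ _ _ Hd), Rmult_le_compat_l; [apply pow_le|]; lra.
Qed.

Lemma close_orbits_contract K a b : close (K + K) a b ->
  d (Nat.iter K phi a) (Nat.iter K phi b) <= 2 * lam ^ K * eta.
Proof.
  intros Hclose. set (x := Nat.iter K phi a). set (y := Nat.iter K phi b).
  assert (Hstable := br_stable_leg_shrinks K a b ltac:(intros i Hi; apply Hclose; lia)).
  assert (Hunstable : d (br x y) y <= lam ^ K * eta).
  { apply br_unstable_leg_shrinks. intros i Hi. unfold x, y. rewrite <- !Nat.iter_add.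
    apply Hclose. lia. }
  pose proof (dist_triangle d_metric x (br x y) y). fold x y in Hstable. lra.
Qed.

Lemma periodic_close_eq m a b : (1 <= m)%nat ->
  Nat.iter m phi a = a -> Nat.iter m phi b = b ->
  (forall i, (i < m)%nat -> d (Nat.iter i phi a) (Nat.iter i phi b) < gam) -> a = b.
Proof.
  intros Hm Ha Hb Hclose.
  assert (Hclose_all : forall K, close K a b).
  { intros K i _. rewrite (iter_periodic_mod phi m i a), (iter_periodic_mod phi m i b) by easy.
    apply Hclose, Nat.mod_upper_bound. lia. }
  pose proof (bracket_modulus_ge0 a gam eta modulus) as Heta.
  apply (dist_eq0 d_metric). destruct (dist_ge0 d_metric a b) as [Hpos|]; [exfalso|easy].
  destruct (pow_mul_vanishes lam (2 * eta) (d a b) ltac:(lra) ltac:(lra) Hpos) as [N HN].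
  specialize (HN (m * N)%nat ltac:(nia)).
  pose proof (close_orbits_contract (m * N) a b (Hclose_all _)).
  rewrite !iter_periodic in * by easy. lra.
Qed.

End CloseOrbits.

Lemma periodic_points_repeat m (q : nat -> X) : (1 <= m)%nat ->
  (forall k, Nat.iter m phi (q k) = q k) -> exists a b, (a < b)%nat /\ q a = q b.
Proof.
  intros Hm Hq.
  destruct (bracket_modulus_exists (eps / 2) ltac:(lra)) as [gam Hgam].
  pose proof (proj1 (proj1 Hgam)) as Hgam0.
  destruct (compact_pigeonhole d_compact
    (fun c z => forall i, (i < m)%nat -> d (Nat.iter i phi c) (Nat.iter i phi z) < gam / 2) q)
    as (a & b & c & Hab & Ha & Hb).
  - intros c. apply open_finite_inter. intros i _.
    apply (open_preimage (Nat.iter i phi) (fun w => d (Nat.iter i phi c) w < gam / 2)).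
    + now apply iter_continuous.
    + now apply ball_open.
  - intros c i _. rewrite (dist_xx d_metric); lra.
  - exists a, b. split; [easy|].
    apply (periodic_close_eq gam (eps / 2) Hgam ltac:(lra) m); auto.
    intros i Hi. specialize (Ha i Hi). specialize (Hb i Hi).
    pose proof (dist_triangle d_metric (Nat.iter i phi (q a)) (Nat.iter i phi c)
      (Nat.iter i phi (q b))).
    rewrite dist_comm in Ha by easy. lra.
Qed.

Section Closing.
Variables (alpha gam : R) (m : nat) (y : X).
Hypotheses (alpha_gt0 : 0 < alpha) (alpha_small : 2 * alpha < eps)
  (modulus : bracket_modulus gam alpha) (contraction : 2 * lam ^ m <= 1)
  (y_recurrent : d y (Nat.iter m phi y) + lam ^ m * alpha < gam).

(* [pseudo_orbit (S k)] lies on the local stable set of [y] and on the local unstable set of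
   [phi^m (pseudo_orbit k)]; pulling [pseudo_orbit N] back by [phi^(m N)] therefore gives a
   point whose orbit follows the m-periodic pseudo-orbit of [y] for N periods. *)
Fixpoint pseudo_orbit (k : nat) : X :=
  match k with
  | O => y
  | S k => br y (Nat.iter m phi (pseudo_orbit k))
  end.

Let gam_le_eps : gam <= eps.
Proof. apply modulus. Qed.

Let step_close u : br y u = u -> d y u < alpha -> d y (Nat.iter m phi u) < gam.
Proof.
  intros Hbr Hu. destruct (stable_iter_contract m y u ltac:(lra) Hbr) as [_ Hd].
  pose proof (dist_triangle d_metric y (Nat.iter m phi y) (Nat.iter m phi u)).
  assert (lam ^ m * d y u <= lam ^ m * alpha) by (apply Rmult_le_compat_l; [apply pow_le|]; lra).
  lra.
Qed.

Lemma pseudo_orbit_stable k :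
  br y (pseudo_orbit k) = pseudo_orbit k /\ d y (pseudo_orbit k) < alpha.
Proof.
  induction k as [|k [IHbr IHd]]; simpl.
  - split; [apply br_xx|]. rewrite (dist_xx d_metric). lra.
  - pose proof (step_close _ IHbr IHd) as Hclose.
    destruct (proj2 modulus _ _ Hclose) as [Hd _].
    split; [apply br_stable_self|]; lra.
Qed.

Lemma pseudo_orbit_unstable k :
  br (pseudo_orbit (S k)) (Nat.iter m phi (pseudo_orbit k)) = pseudo_orbit (S k) /\
  d (pseudo_orbit (S k)) (Nat.iter m phi (pseudo_orbit k)) < alpha.
Proof.
  destruct (pseudo_orbit_stable k) as [Hbr Hd].
  pose proof (step_close _ Hbr Hd) as Hclose.
  destruct (proj2 modulus _ _ Hclose) as [_ Hd'].
  simpl. split; [apply br_unstable_self|]; lra.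
Qed.

Lemma unstable_glue v k :
  br v (pseudo_orbit (S k)) = v -> d v (pseudo_orbit (S k)) <= alpha ->
  br v (Nat.iter m phi (pseudo_orbit k)) = v /\ d v (Nat.iter m phi (pseudo_orbit k)) <= 2 * alpha.
Proof.
  intros Hbr Hd. destruct (pseudo_orbit_unstable k) as [Hbr' Hd'].
  pose proof (dist_triangle d_metric v (pseudo_orbit (S k)) (Nat.iter m phi (pseudo_orbit k))).
  split; [|lra]. apply (br_unstable_trans _ (pseudo_orbit (S k))); first [easy | lra].
Qed.

Lemma pullback_unstable N j : (j <= N)%nat ->
  br (Nat.iter (m * j) phiinv (pseudo_orbit N)) (pseudo_orbit (N - j)) =
    Nat.iter (m * j) phiinv (pseudo_orbit N) /\
  d (Nat.iter (m * j) phiinv (pseudo_orbit N)) (pseudo_orbit (N - j)) <= alpha.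
Proof.
  induction j as [|j IH]; intros Hj.
  - rewrite Nat.mul_0_r, Nat.sub_0_r. split; [apply br_xx|]. rewrite (dist_xx d_metric). lra.
  - set (v := Nat.iter (m * j) phiinv (pseudo_orbit N)) in IH.
    destruct IH as [Hbr Hd]; [lia|].
    replace (N - j)%nat with (S (N - S j)) in Hbr, Hd by lia.
    destruct (unstable_glue v _ Hbr Hd) as [Hbr' Hd'].
    destruct (unstable_iter_contract m v (Nat.iter m phi (pseudo_orbit (N - S j))) ltac:(lra) Hbr')
      as [Hbr'' Hd''].
    replace (Nat.iter m phiinv v) with (Nat.iter (m * S j) phiinv (pseudo_orbit N)) in Hbr'', Hd''
      by (unfold v; rewrite <- Nat.iter_add; f_equal; lia).
    rewrite (iter_cancel phi phiinv m m), Nat.sub_diag in Hbr'', Hd''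
      by first [exact phiinvK | lia].
    split; [easy|].
    assert (lam ^ m * d v (Nat.iter m phi (pseudo_orbit (N - S j))) <= lam ^ m * (2 * alpha))
      by (apply Rmult_le_compat_l; [apply pow_le|]; lra).
    simpl in *. nra.
Qed.

Definition shadow_point (N : nat) : X := Nat.iter (m * N) phiinv (pseudo_orbit N).

Lemma shadow_point_orbit N k t : (k < N)%nat -> (t <= m)%nat ->
  d (Nat.iter (k * m + t) phi (shadow_point N)) (Nat.iter t phi y) <= 3 * alpha.
Proof.
  intros Hk Ht. set (v := Nat.iter (m * (N - S k)) phiinv (pseudo_orbit N)).
  assert (Hshift : Nat.iter (k * m + t) phi (shadow_point N) = Nat.iter (m - t) phiinv v).
  { unfold shadow_point, v. rewrite (iter_cancel phiinv phi) by first [exact phiK | nia].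
    rewrite <- Nat.iter_add. f_equal. nia. }
  rewrite Hshift.
  destruct (pullback_unstable N (N - S k) ltac:(lia)) as [Hbr Hd]. fold v in Hbr, Hd.
  replace (N - (N - S k))%nat with (S k) in Hbr, Hd by lia.
  destruct (unstable_glue v k Hbr Hd) as [Hbr' Hd'].
  destruct (unstable_iter_contract (m - t) v (Nat.iter m phi (pseudo_orbit k)) ltac:(lra) Hbr')
    as [_ Hleg].
  rewrite (iter_cancel phi phiinv) in Hleg by first [exact phiinvK | lia].
  replace (m - (m - t))%nat with t in Hleg by lia.
  destruct (pseudo_orbit_stable k) as [Hbr_y Hd_y].
  destruct (stable_iter_contract t y (pseudo_orbit k) ltac:(lra) Hbr_y) as [_ Hleg_y].
  pose proof (pow_mul_le lam (d v (Nat.iter m phi (pseudo_orbit k))) (m - t) ltac:(lra)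
    (dist_ge0 d_metric _ _)).
  pose proof (pow_mul_le lam (d y (pseudo_orbit k)) t ltac:(lra) (dist_ge0 d_metric _ _)).
  pose proof (dist_triangle d_metric (Nat.iter (m - t) phiinv v) (Nat.iter t phi (pseudo_orbit k))
    (Nat.iter t phi y)).
  rewrite (dist_comm d_metric (Nat.iter t phi (pseudo_orbit k))) in *. lra.
Qed.

Let m_pos : (1 <= m)%nat.
Proof. destruct m; [simpl in contraction; lra|lia]. Qed.

Lemma shadow_almost_periodic gam' eta K :
  bracket_modulus gam' eta -> eta < eps -> 6 * alpha < gam' ->
  d (Nat.iter K phi (shadow_point (K + K + 2)))
    (Nat.iter m phi (Nat.iter K phi (shadow_point (K + K + 2)))) <= 2 * lam ^ K * eta.
Proof.
  intros Hmod Heta Hgam. set (o := shadow_point (K + K + 2)).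
  rewrite <- Nat.iter_add, Nat.add_comm, Nat.iter_add.
  apply (close_orbits_contract gam' eta Hmod Heta). intros i Hi.
  rewrite <- Nat.iter_add.
  pose proof (Nat.div_mod_eq i m). pose proof (Nat.mod_upper_bound i m ltac:(lia)).
  assert (Hq : (i / m <= i)%nat) by (apply Nat.Div0.div_le_upper_bound; nia).
  pose proof (shadow_point_orbit (K + K + 2) (i / m) (i mod m) ltac:(lia) ltac:(lia)) as Hnow.
  pose proof (shadow_point_orbit (K + K + 2) (S (i / m)) (i mod m) ltac:(lia) ltac:(lia)) as Hlater.
  replace (i / m * m + i mod m)%nat with i in Hnow by nia.
  replace (S (i / m) * m + i mod m)%nat with (i + m)%nat in Hlater by nia.
  fold o in Hnow, Hlater.
  pose proof (dist_triangle d_metric (Nat.iter i phi o) (Nat.iter (i mod m) phi y)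
    (Nat.iter (i + m) phi o)).
  rewrite (dist_comm d_metric (Nat.iter (i mod m) phi y)) in *. lra.
Qed.

Lemma iter_almost_fixed gam' eta :
  bracket_modulus gam' eta -> eta < eps -> 6 * alpha < gam' ->
  forall e, 0 < e -> exists x, d x (Nat.iter m phi x) < e.
Proof.
  intros Hmod Heta Hgam e He.
  pose proof (bracket_modulus_ge0 y gam' eta Hmod) as Heta0.
  destruct (pow_mul_vanishes lam (2 * eta) e ltac:(lra) ltac:(lra) He) as [K HK].
  exists (Nat.iter K phi (shadow_point (K + K + 2))).
  specialize (HK K (Nat.le_refl K)).
  pose proof (shadow_almost_periodic gam' eta K Hmod Heta Hgam). lra.
Qed.

End Closing.

Lemma exists_periodic_point : exists p m, (1 <= m)%nat /\ Nat.iter m phi p = p.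
Proof.
  destruct (bracket_modulus_exists (eps / 2) ltac:(lra)) as [gam1 Hgam1].
  pose proof (proj1 Hgam1) as Hgam1_pos.
  (* A shadow orbit and its shift by m both stay within 3 * alpha of the orbit of y. *)
  set (alpha := gam1 / 7).
  assert (Halpha : 0 < alpha /\ 2 * alpha < eps /\ 6 * alpha < gam1) by (unfold alpha; lra).
  destruct Halpha as (Halpha0 & Halpha_eps & Halpha_gam1).
  destruct (bracket_modulus_exists alpha ltac:(lra)) as [gam2 Hgam2].
  pose proof (proj1 (proj1 Hgam2)) as Hgam2_pos.
  destruct (pow_mul_vanishes lam alpha (Rmin (gam2 / 2) (alpha / 2)) ltac:(lra) ltac:(lra)
    ltac:(apply Rmin_glb_lt; lra)) as [N HN].
  pose proof (Rmin_l (gam2 / 2) (alpha / 2)). pose proof (Rmin_r (gam2 / 2) (alpha / 2)).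
  destruct (X_infinite nil) as [x0 _].
  destruct (compact_recurrence d_metric d_compact phi x0 (S N) (gam2 / 2) ltac:(lra))
    as (y & m & Hm & Hrec).
  specialize (HN m ltac:(lia)).
  destruct (compact_lsc_zero d_metric d_compact (fun x => d x (Nat.iter m phi x))) as [p Hp].
  - intros x. apply (dist_ge0 d_metric).
  - now apply dist_image_lsc, iter_continuous.
  - apply (iter_almost_fixed alpha gam2 m y Halpha0 Halpha_eps Hgam2 ltac:(nra) ltac:(lra)
      gam1 (eps / 2) Hgam1 ltac:(lra) Halpha_gam1).
  - exists p, m. split; [lia|]. symmetry. now apply (dist_eq0 d_metric).
Qed.

End SmaleSpace.

Lemma gpow_add {G : Type} (mul : G -> G -> G) (inv : G -> G) (e g : G) (a b : nat) :
  is_group mul inv e -> gpow mul e g (a + b) = mul (gpow mul e g a) (gpow mul e g b).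
Proof.
  intros (Hassoc & He_l & _). induction a as [|a IH]; simpl; [now rewrite He_l|].
  now rewrite IH, Hassoc.
Qed.

Lemma free_action_power_orbit_inj {G X : Type} (mul : G -> G -> G) (inv : G -> G) (e g : G)
    (act : G -> X -> X) (p : X) (a b : nat) :
  is_group mul inv e -> (forall x, act e x = x) ->
  (forall g h x, act (mul g h) x = act g (act h x)) ->
  free_action e act -> infinite_order mul e g -> (a < b)%nat ->
  act (gpow mul e g a) p <> act (gpow mul e g b) p.
Proof.
  intros Hgroup Hact_e Hact_mul Hfree Hg Hab Heq.
  assert (Hcancel : forall u x, act (inv u) (act u x) = x)
    by (intros u x; destruct Hgroup as (_ & _ & _ & Hinv & _); now rewrite <- Hact_mul, Hinv).
  replace b with (a + (b - a))%nat in Heq by lia.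
  rewrite (gpow_add mul inv e g a (b - a) Hgroup), Hact_mul in Heq.
  apply (f_equal (act (inv (gpow mul e g a)))) in Heq. rewrite !Hcancel in Heq.
  apply (Hg (b - a)%nat); [lia|]. now apply (Hfree p).
Qed.

Theorem proposition2p6
  (G : Type) (mul : G -> G -> G) (inv : G -> G) (e : G)
  (X : Type) (d : X -> X -> R) (phi phiinv : X -> X) (br : X -> X -> X)
  (eps lam : R) (act : G -> X -> X) :
  is_group mul inv e ->
  (exists g : G, infinite_order mul e g) ->
  is_smale_space d phi phiinv br eps lam ->
  is_smale_action mul e d phi act ->
  ~ free_action e act.
Proof.
  intros Hgroup [g Hg] Hsmale (_ & Hact_e & Hact_mul & Hact_phi) Hfree.
  destruct (exists_periodic_point Hsmale) as (p & m & Hm & Hp).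
  destruct (periodic_points_repeat Hsmale m (fun k => act (gpow mul e g k) p) Hm)
    as (a & b & Hab & Hrepeat).
  - intros k. rewrite <- (iter_commute phi (act (gpow mul e g k))) by apply Hact_phi.
    now rewrite Hp.
  - exact (free_action_power_orbit_inj mul inv e g act p a b Hgroup Hact_e Hact_mul Hfree Hg
      Hab Hrepeat).
Qed.
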